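(* Let $(V,L,\varphi,E)$ be a valuation system. If $\varphi$ is $\Pi_{\aleph_1}$-extendible, then the hierarchy has collapsed at $\Pi_{\aleph_1}\varphi$.
   Context: $\aleph_1$ denotes the smallest uncountable ordinal. A valuation system $(V,L,\varphi,E)$ consists of: (i) a lattice $V$ which is $\sigma$-distributive (for every $a\in V$ and sequence $(b_n)$ with existing infimum, $\bigwedge_n(a\vee b_n)$ exists and equals $a\vee\bigwedge_n b_n$, and dually for suprema); (ii) a sublattice $L$ of $V$; (iii) a partially ordered abelian group $E$ which is R-complete (whenever $x_1\ge x_2\ge\cdots$ and $y_1\ge y_2\ge\cdots$ in $E$ are such that $\bigwedge_n(x_n+y_n)$ exists, $\bigwedge_n x_n$ and $\bigwedge_n y_n$ exist; dually for increasing sequences); (iv) a valuation $\varphi:L\to E$ (order-preserving, $\varphi(a\wedge b)+\varphi(a\vee b)=\varphi(a)+\varphi(b)$). A decreasing (resp. increasing) sequence $(a_n)$ in $L$ is $\varphi$-convergent if $\bigwedge_n a_n$ exists in $V$ and $\bigwedge_n\varphi(a_n)$ exists in $E$ (resp. with suprema). $\Pi L:=\{\bigwedge_n a_n:(a_n)\ \varphi\text{-convergent decreasing}\}$ and $\varphi$ is $\Pi$-extendible if there is a valuation $\Pi\varphi:\Pi L\to E$ with $\Pi\varphi(\bigwedge_n a_n)=\bigwedge_n\varphi(a_n)$ for all such sequences; $\Sigma L,\Sigma$-extendible, $\Sigma\varphi$ dually. Hierarchy (transfinite recursion): $\Pi_0\varphi=\Sigma_0\varphi=\varphi$ on $L$;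 $\varphi$ is $\Pi_{\alpha+1}$-extendible iff it is $\Sigma_\alpha$-extendible and $\Sigma_\alpha\varphi$ is $\Pi$-extendible, with $\Pi_{\alpha+1}L=\Pi(\Sigma_\alpha L)$, $\Pi_{\alpha+1}\varphi=\Pi(\Sigma_\alpha\varphi)$; $\varphi$ is $\Sigma_{\alpha+1}$-extendible iff it is $\Pi_\alpha$-extendible and $\Pi_\alpha\varphi$ is $\Sigma$-extendible, with $\Sigma_{\alpha+1}\varphi=\Sigma(\Pi_\alpha\varphi)$; at a limit $\lambda$, $\varphi$ is $\Pi_\lambda$-extendible iff $\Pi_\alpha$-extendible for all $\alpha<\lambda$, and then $\Pi_\lambda L=\bigcup_{\alpha<\lambda}\Pi_\alpha L$ with $\Pi_\lambda\varphi(c)=\Pi_\beta\varphi(c)$ for $c\in\Pi_\beta L$; similarly $\Sigma_\lambda$. The hierarchy has collapsed at $Q$, where $Q=\Pi_\alpha\varphi$ or $Q=\Sigma_\alpha\varphi$, if $\varphi$ is $\Pi_{\alpha+1}$- and $\Sigma_{\alpha+1}$-extendible and $\Pi(Q)=Q=\Sigma(Q)$ (i.e. $Q$ is $\Pi$- and $\Sigma$-extendible with $\Pi Q=Q=\Sigma Q$). *)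

From HB Require Import structures.
From mathcomp Require Import all_boot all_order all_algebra.
From Stdlib Require Import ClassicalEpsilon Wellfounded.

Set Implicit Arguments.
Unset Strict Implicit.
Unset Printing Implicit Defensive.

Import Order.LTheory GRing.Theory.
Local Open Scope ring_scope.

Section Bounds.
Context {d : Order.disp_t} {T : porderType d}.

Definition is_inf (S : T -> Prop) (x : T) : Prop :=
  (forall y, S y -> (x <= y)%O) /\
  (forall z, (forall y, S y -> (z <= y)%O) -> (z <= x)%O).

Definition is_sup (S : T -> Prop) (x : T) : Prop :=
  (forall y, S y -> (y <= x)%O) /\
  (forall z, (forall y, S y -> (y <= z)%O) -> (x <= z)%O).

Definition seq_inf (a : nat -> T) (x : T) : Prop := is_inf (fun y => exists n, y = a n) x.
Definition seq_sup (a : nat -> T) (x : T) : Prop := is_sup (fun y => exists n, y = a n) x.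

Definition decreasing (a : nat -> T) : Prop := forall n, (a n.+1 <= a n)%O.
Definition increasing (a : nat -> T) : Prop := forall n, (a n <= a n.+1)%O.
End Bounds.

Definition sigma_distributive {d : Order.disp_t} (V : latticeType d) : Prop :=
  forall (a : V) (b : nat -> V),
    (forall c, seq_inf b c -> seq_inf (fun n => Order.join a (b n)) (Order.join a c)) /\
    (forall c, seq_sup b c -> seq_sup (fun n => Order.meet a (b n)) (Order.meet a c)).

Definition sublattice {d : Order.disp_t} {V : latticeType d} (L : V -> Prop) : Prop :=
  forall a b, L a -> L b -> L (Order.meet a b) /\ L (Order.join a b).

Definition po_group (E : porderZmodType) : Prop :=
  forall x y z : E, (x <= y)%O -> (x + z <= y + z)%O.

Definition R_complete (E : porderZmodType) : Prop :=
  (forall x y : nat -> E, decreasing x -> decreasing y ->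
     (exists z, seq_inf (fun n => x n + y n) z) ->
     (exists z, seq_inf x z) /\ (exists z, seq_inf y z)) /\
  (forall x y : nat -> E, increasing x -> increasing y ->
     (exists z, seq_sup (fun n => x n + y n) z) ->
     (exists z, seq_sup x z) /\ (exists z, seq_sup y z)).

(* (iv) valuation on a subset D of V (D is meant to be a sublattice) *)
Definition valuation {d : Order.disp_t} {V : latticeType d} {E : porderZmodType}
  (D : V -> Prop) (psi : V -> E) : Prop :=
  (forall a b, D a -> D b -> (a <= b)%O -> (psi a <= psi b)%O) /\
  (forall a b, D a -> D b ->
     psi (Order.meet a b) + psi (Order.join a b) = psi a + psi b).

Section Ext.
Context {d : Order.disp_t} {V : latticeType d} {E : porderZmodType}.
Implicit Types (D : V -> Prop) (f : V -> E).

Definition conv_dec D f (a : nat -> V) : Prop :=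
  (forall n, D (a n)) /\ decreasing a /\
  (exists c, seq_inf a c) /\ (exists e, seq_inf (fun n => f (a n)) e).

Definition conv_inc D f (a : nat -> V) : Prop :=
  (forall n, D (a n)) /\ increasing a /\
  (exists c, seq_sup a c) /\ (exists e, seq_sup (fun n => f (a n)) e).

Definition PiSet D f : V -> Prop := fun c => exists a, conv_dec D f a /\ seq_inf a c.
Definition SigSet D f : V -> Prop := fun c => exists a, conv_inc D f a /\ seq_sup a c.

Definition Pi_extendible D f : Prop :=
  exists psi : V -> E,
    sublattice (PiSet D f) /\ valuation (PiSet D f) psi /\
    (forall a c e, conv_dec D f a -> seq_inf a c ->
        seq_inf (fun n => f (a n)) e -> psi c = e).

Definition Sig_extendible D f : Prop :=
  exists psi : V -> E,
    sublattice (SigSet D f) /\ valuation (SigSet D f) psi /\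
    (forall a c e, conv_inc D f a -> seq_sup a c ->
        seq_sup (fun n => f (a n)) e -> psi c = e).

(* the values of Pi f and Sigma f (uniquely determined when extendible) *)
Definition Pi_val D f : V -> E := fun c =>
  epsilon (inhabits 0) (fun e => exists a, conv_dec D f a /\ seq_inf a c /\
                                     seq_inf (fun n => f (a n)) e).
Definition Sig_val D f : V -> E := fun c =>
  epsilon (inhabits 0) (fun e => exists a, conv_inc D f a /\ seq_sup a c /\
                                     seq_sup (fun n => f (a n)) e).

(* A level of the hierarchy: (is extendible up to here, domain, valuation) *)
Record level := Level { lext : Prop; ldom : V -> Prop; lval : V -> E }.

Definition PiL (Q : level) : level :=
  Level (lext Q /\ Pi_extendible (ldom Q) (lval Q))
        (PiSet (ldom Q) (lval Q)) (Pi_val (ldom Q) (lval Q)).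
Definition SigL (Q : level) : level :=
  Level (lext Q /\ Sig_extendible (ldom Q) (lval Q))
        (SigSet (ldom Q) (lval Q)) (Sig_val (ldom Q) (lval Q)).

Definition limL (I : Type) (g : I -> level) : level :=
  Level (forall i, lext (g i)) (fun c => exists i, ldom (g i) c)
        (fun c => match excluded_middle_informative (exists i, ldom (g i) c) with
                  | left h => lval (g (proj1_sig (constructive_indefinite_description _ h))) c
                  | right _ => 0
                  end).

(* Hierarchy indexed by a well-founded (total) strict order R on W:
   hier a = (Pi_a, Sigma_a). *)
Section Hier.
Variables (W : Type) (R : W -> W -> Prop) (wfR : well_founded R)
          (L : V -> Prop) (phi : V -> E).

Definition base_level : level := Level True L phi.

Definition hier_step (a : W) (rec : forall b, R b a -> level * level) : level * level :=
  match excluded_middle_informative (exists b, R b a) with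
  | right _ => (base_level, base_level)
  | left _ =>
    match excluded_middle_informative
            (exists b, R b a /\ forall g, R g a -> ~ R b g) with
    | left hs =>                                              (* a = b + 1 *)
      let b := proj1_sig (constructive_indefinite_description _ hs) in
      let hb := proj1 (proj2_sig (constructive_indefinite_description _ hs)) in
      let p := rec b hb in (PiL p.2, SigL p.1)
    | right _ =>                                              (* a limit *)
      (limL (fun s : {b | R b a} => (rec (proj1_sig s) (proj2_sig s)).1),
       limL (fun s : {b | R b a} => (rec (proj1_sig s) (proj2_sig s)).2))
    end
  end.

Definition hier : W -> level * level := Fix wfR (fun _ => (level * level)%type) hier_step.

(* Pi_lambda and Sigma_lambda where lambda is the order type of W (a limit) *)
Definition Pi_top : level := limL (fun a => (hier a).1).
Definition Sig_top : level := limL (fun a => (hier a).2).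
End Hier.

(* The hierarchy has collapsed at Q (= Pi_al or Sigma_al), given
   PiA = Pi_al and SigA = Sigma_al : phi is Pi_{al+1}- and Sigma_{al+1}-
   extendible, Q is Pi- and Sigma-extendible and Pi Q = Q = Sigma Q. *)
Definition collapsed_at (PiA SigA Q : level) : Prop :=
  lext (PiL SigA) /\ lext (SigL PiA) /\
  Pi_extendible (ldom Q) (lval Q) /\ Sig_extendible (ldom Q) (lval Q) /\
  (forall c, PiSet (ldom Q) (lval Q) c <-> ldom Q c) /\
  (forall c, ldom Q c -> Pi_val (ldom Q) (lval Q) c = lval Q c) /\
  (forall c, SigSet (ldom Q) (lval Q) c <-> ldom Q c) /\
  (forall c, ldom Q c -> Sig_val (ldom Q) (lval Q) c = lval Q c).
End Ext.

(* (W, R) has order type aleph_1 = omega_1: a strict well-order whose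
   carrier is uncountable and all of whose proper initial segments are
   countable. *)
Definition countable_set {W : Type} (S : W -> Prop) : Prop :=
  exists f : W -> nat, forall x y, S x -> S y -> f x = f y -> x = y.

Definition omega1_order {W : Type} (R : W -> W -> Prop) : Prop :=
  well_founded R /\
  (forall x y z, R x y -> R y z -> R x z) /\
  (forall x y, R x y \/ x = y \/ R y x) /\
  ~ countable_set (fun _ : W => True) /\
  (forall a, countable_set (fun b => R b a)).

From HB Require Import structures.
From mathcomp Require Import all_boot all_order all_algebra.
From Stdlib Require Import ClassicalEpsilon Classical FunctionalExtensionality.

(* Every level of the hierarchy extends all earlier ones, so Π_ℵ₁φ and
   Σ_ℵ₁φ are unions of ℵ₁-chains of valuations.  As ℵ₁ has uncountable
   cofinality, every sequence in such a union already lies in a single level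
   Π_α (or Σ_α); its Π- and Σ-limits are then computed by Π_{α+1} and
   Σ_{α+1}, which again lie in the union.  Hence Π_ℵ₁φ is closed under both
   extensions, and each of them is the identity on it. *)

Set Implicit Arguments.
Unset Strict Implicit.
Unset Printing Implicit Defensive.
Import Order.LTheory.

Section ConstantSequence.
Context {d : Order.disp_t} {T : porderType d}.

Lemma seq_inf_cst (x : T) : seq_inf (fun _ => x) x.
Proof. by split=> [y [n ->] | z]; last by apply; exists 0%N. Qed.

Lemma seq_sup_cst (x : T) : seq_sup (fun _ => x) x.
Proof. by split=> [y [n ->] | z]; last by apply; exists 0%N. Qed.

End ConstantSequence.

Section Sublevel.
Context {d : Order.disp_t} {V : latticeType d} {E : porderZmodType}.
Implicit Types P Q S : @level d V E.

Definition sublevel P Q : Prop :=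
  forall x, ldom P x -> ldom Q x /\ lval Q x = lval P x.

Definition pair_sublevel (p q : @level d V E * @level d V E) : Prop :=
  [/\ sublevel p.1 q.1, sublevel p.1 q.2, sublevel p.2 q.1 & sublevel p.2 q.2].

Definition level_chain I (F : I -> @level d V E) : Prop :=
  forall i j, sublevel (F i) (F j) \/ sublevel (F j) (F i).

Lemma sublevel_refl P : sublevel P P.
Proof. by []. Qed.

Lemma sublevel_trans P Q S : sublevel P Q -> sublevel Q S -> sublevel P S.
Proof.
move=> PQ QS x /PQ [Qx <-]; exact: QS.
Qed.

Lemma pair_sublevel_trans p q r : pair_sublevel p q ->
  sublevel q.1 r.1 -> sublevel q.2 r.2 -> pair_sublevel p r.
Proof.
case=> p1q1 p1q2 p2q1 p2q2 q1r1 q2r2.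
by split; [exact: sublevel_trans p1q1 q1r1 | exact: sublevel_trans p1q2 q2r2 |
           exact: sublevel_trans p2q1 q1r1 | exact: sublevel_trans p2q2 q2r2].
Qed.

Lemma limL_val I (F : I -> @level d V E) x : ldom (limL F) x ->
  exists i, ldom (F i) x /\ lval (limL F) x = lval (F i) x.
Proof.
rewrite /limL /=; case: excluded_middle_informative => // x_in _.
set i := proj1_sig _; exists i; split=> //.
exact: proj2_sig (constructive_indefinite_description _ x_in).
Qed.

Lemma limL_sub I (F : I -> @level d V E) Q :
  (forall i, sublevel (F i) Q) -> sublevel (limL F) Q.
Proof.
move=> FQ x /limL_val [i [Fx ->]]; exact: FQ.
Qed.

Lemma sublevel_limL I (F : I -> @level d V E) i :
  level_chain F -> sublevel (F i) (limL F).
Proof.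
move=> chainF x Fx; have [|j [Fjx ->]] := @limL_val I F x; first by exists i.
split; first by exists i.
by case: (chainF i j) => [/(_ x Fx) [_ ->] | /(_ x Fjx) [_ ->]].
Qed.

End Sublevel.

Section Cover.
Context {d : Order.disp_t} {V : latticeType d} {E : porderZmodType}.

Lemma sublattice_valuation_of_cover (D : V -> Prop) (f : V -> E) :
  (forall x y, D x -> D y -> exists (D' : V -> Prop) (f' : V -> E),
     [/\ sublattice D', valuation D' f', D' x, D' y &
         forall z, D' z -> D z /\ f z = f' z]) ->
  sublattice D /\ valuation D f.
Proof.
move=> cover; split; [|split] => x y Dx Dy.
- have [D' [f' [sub' _ D'x D'y back]]] := cover x y Dx Dy.
  by have [/back [? _] /back [? _]] := sub' x y D'x D'y.
- have [D' [f' [_ [mon' _] D'x D'y back]]] := cover x y Dx Dy.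
  by rewrite (back x D'x).2 (back y D'y).2; exact: mon'.
- have [D' [f' [sub' [_ mod'] D'x D'y back]]] := cover x y Dx Dy.
  have [D'm D'j] := sub' x y D'x D'y.
  rewrite (back _ D'm).2 (back _ D'j).2 (back x D'x).2 (back y D'y).2.
  exact: mod'.
Qed.

End Cover.

(* Π and Σ differ only in the monotonicity and limit notions used, so they are
   treated as two instances of one construction; [PiL Q] and [SigL Q] are
   convertible to [ext_level Pi_mode Q] and [ext_level Sig_mode Q]. *)
Record limit_mode {d : Order.disp_t} (V : latticeType d) (E : porderZmodType) :=
  LimitMode {
    lm_mono : (nat -> V) -> Prop;
    lm_limV : (nat -> V) -> V -> Prop;
    lm_limE : (nat -> E) -> E -> Prop;
    lm_mono_cst : forall x, lm_mono (fun _ => x);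
    lm_limV_cst : forall x, lm_limV (fun _ => x) x;
    lm_limE_cst : forall x, lm_limE (fun _ => x) x }.

Section Extension.
Context {d : Order.disp_t} {V : latticeType d} {E : porderZmodType}.
Variable m : limit_mode V E.
Local Notation mono := (lm_mono m).
Local Notation limV := (lm_limV m).
Local Notation limE := (lm_limE m).
Implicit Types (D : V -> Prop) (f : V -> E) (P Q T : @level d V E).

Definition conv D f (a : nat -> V) : Prop :=
  (forall n, D (a n)) /\ mono a /\ (exists c, limV a c) /\
  (exists e, limE (fun n => f (a n)) e).

Definition ext_set D f : V -> Prop := fun c => exists a, conv D f a /\ limV a c.

Definition extendible D f : Prop :=
  exists psi : V -> E,
    sublattice (ext_set D f) /\ valuation (ext_set D f) psi /\
    (forall a c e, conv D f a -> limV a c -> limE (fun n => f (a n)) e -> psi c = e).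

Definition ext_val D f : V -> E := fun c =>
  epsilon (inhabits 0%R) (fun e => exists a, conv D f a /\ limV a c /\
                                         limE (fun n => f (a n)) e).

Definition ext_level Q : @level d V E :=
  Level (lext Q /\ extendible (ldom Q) (lval Q))
        (ext_set (ldom Q) (lval Q)) (ext_val (ldom Q) (lval Q)).

Definition ext_fixed T : Prop :=
  [/\ extendible (ldom T) (lval T),
      forall c, ext_set (ldom T) (lval T) c <-> ldom T c &
      forall c, ldom T c -> ext_val (ldom T) (lval T) c = lval T c].

Lemma ext_val_spec D f c : ext_set D f c ->
  exists a, conv D f a /\ limV a c /\ limE (fun n => f (a n)) (ext_val D f c).
Proof.
case=> a [conv_a ac]; have [_ [_ [_ [e ae]]]] := conv_a.
have ex_e : exists e, exists a, conv D f a /\ limV a c /\ limE (fun n => f (a n)) e.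
  by exists e, a.
exact: epsilon_spec ex_e.
Qed.

Lemma ext_val_eq D f a c e : extendible D f -> conv D f a -> limV a c ->
  limE (fun n => f (a n)) e -> ext_val D f c = e.
Proof.
move=> [psi [_ [_ psi_lim]]] conv_a ac ae.
have [a' [conv_a' [a'c a'e]]] := ext_val_spec (ex_intro _ a (conj conv_a ac)).
by rewrite -(psi_lim _ _ _ conv_a' a'c a'e) (psi_lim _ _ _ conv_a ac ae).
Qed.

Lemma conv_cst D f x : D x -> conv D f (fun _ => x).
Proof.
move=> Dx; split=> //; split; first exact: lm_mono_cst.
by split; [exists x; exact: lm_limV_cst | exists (f x); exact: lm_limE_cst].
Qed.

Lemma ext_set_self D f x : D x -> ext_set D f x.
Proof. by move=> Dx; exists (fun _ => x); split; [exact: conv_cst | exact: lm_limV_cst]. Qed.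

Lemma ext_val_self D f x : extendible D f -> D x -> ext_val D f x = f x.
Proof.
move=> extf Dx.
by apply: ext_val_eq extf (conv_cst f Dx) _ _; [exact: lm_limV_cst | exact: lm_limE_cst].
Qed.

Lemma ext_set_valuation D f : extendible D f ->
  sublattice (ext_set D f) /\ valuation (ext_set D f) (ext_val D f).
Proof.
move=> extf; have [psi [sub [[mon mod] psi_lim]]] := extf.
have psi_val c : ext_set D f c -> psi c = ext_val D f c.
  by case/ext_val_spec=> a [conv_a [ac ae]]; exact: psi_lim conv_a ac ae.
split=> //; split=> [x y Dx Dy lexy | x y Dx Dy].
  by rewrite -!psi_val //; exact: mon.
by have [Dm Dj] := sub x y Dx Dy; rewrite -!psi_val //; exact: mod.
Qed.

Lemma conv_sublevel P Q a : sublevel P Q -> conv (ldom P) (lval P) a ->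
  conv (ldom Q) (lval Q) a /\ (fun n => lval Q (a n)) = (fun n => lval P (a n)).
Proof.
move=> PQ [Pa [mono_a [limV_a [e ae]]]].
have QPa : (fun n => lval Q (a n)) = (fun n => lval P (a n)).
  by apply: functional_extensionality => n; case: (PQ _ (Pa n)).
split=> //; split; first by move=> n; case: (PQ _ (Pa n)).
by split=> //; split=> //; exists e; rewrite QPa.
Qed.

Lemma ext_level_mono P Q : sublevel P Q -> extendible (ldom Q) (lval Q) ->
  sublevel (ext_level P) (ext_level Q).
Proof.
move=> PQ extQ x /ext_val_spec [a [conv_a [ax ae]]].
have [conv_Qa QPa] := conv_sublevel PQ conv_a.
split; first by exists a.
by apply: ext_val_eq extQ conv_Qa ax _; rewrite QPa.
Qed.

Lemma ext_level_self Q : extendible (ldom Q) (lval Q) -> sublevel Q (ext_level Q).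
Proof. by move=> extQ x Qx; split; [exact: ext_set_self | exact: ext_val_self]. Qed.

(* Every sequence in [T] lies in a single [S i], so its limit is computed by
   [ext_level (S i)], which is part of [T]. *)
Lemma ext_fixed_of_cover I (S : I -> @level d V E) T :
  (forall i, extendible (ldom (S i)) (lval (S i))) ->
  (forall i, sublevel (ext_level (S i)) T) ->
  (forall s : nat -> V, (forall n, ldom T (s n)) ->
     exists i, forall n, ldom (S i) (s n) /\ lval T (s n) = lval (S i) (s n)) ->
  ext_fixed T.
Proof.
move=> ext_S ext_S_sub cover.
have lim_in a c e : conv (ldom T) (lval T) a -> limV a c ->
    limE (fun n => lval T (a n)) e -> ldom T c /\ lval T c = e.
  move=> [Ta [mono_a _]] ac ae; have [i Sa] := cover a Ta.
  have TSa : (fun n => lval T (a n)) = (fun n => lval (S i) (a n)).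
    by apply: functional_extensionality => n; case: (Sa n).
  rewrite TSa in ae.
  have conv_Sa : conv (ldom (S i)) (lval (S i)) a.
    split; first by move=> n; case: (Sa n).
    by split=> //; split; [exists c | exists e].
  have [Tc ->] := ext_S_sub i c (ex_intro _ a (conj conv_Sa ac)).
  by split=> //; exact: ext_val_eq (ext_S i) conv_Sa ac ae.
have ext_set_T c : ext_set (ldom T) (lval T) c <-> ldom T c.
  split=> [[a [conv_a ac]] | ]; last exact: ext_set_self.
  by have [_ [_ [_ [e ae]]]] := conv_a; case: (lim_in a c e conv_a ac ae).
have [subT [monT modT]] : sublattice (ldom T) /\ valuation (ldom T) (lval T).
  apply: sublattice_valuation_of_cover => x y Tx Ty.
  have [|i Sxy] := cover (fun n => if n is 0%N then x else y); first by case.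
  have [Sx _] := Sxy 0%N; have [Sy _] := Sxy 1%N.
  have [sub_i val_i] := ext_set_valuation (ext_S i).
  exists (ext_set (ldom (S i)) (lval (S i))), (ext_val (ldom (S i)) (lval (S i))).
  by split=> //; [exact: ext_set_self | exact: ext_set_self | exact: ext_S_sub].
have extT : extendible (ldom T) (lval T).
  exists (lval T); split; [|split; [split|]].
  - move=> x y /ext_set_T Tx /ext_set_T Ty.
    by have [? ?] := subT x y Tx Ty; split; apply/ext_set_T.
  - by move=> x y /ext_set_T Tx /ext_set_T Ty; exact: monT.
  - by move=> x y /ext_set_T Tx /ext_set_T Ty; exact: modT.
  - by move=> a c e conv_a ac ae; case: (lim_in a c e conv_a ac ae).
by split=> // c Tc; exact: ext_val_self.
Qed.

End Extension.

Section PiSigma.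
Context {d : Order.disp_t} {V : latticeType d} {E : porderZmodType}.
Implicit Types P Q : @level d V E.

Definition Pi_mode : limit_mode V E :=
  @LimitMode d V E (@decreasing d V) (@seq_inf d V) (@seq_inf _ E)
            (fun x n => le_refl x) seq_inf_cst seq_inf_cst.

Definition Sig_mode : limit_mode V E :=
  @LimitMode d V E (@increasing d V) (@seq_sup d V) (@seq_sup _ E)
            (fun x n => le_refl x) seq_sup_cst seq_sup_cst.

Lemma PiL_mono P Q : sublevel P Q -> Pi_extendible (ldom Q) (lval Q) ->
  sublevel (PiL P) (PiL Q).
Proof. exact: (ext_level_mono (m := Pi_mode)). Qed.

Lemma SigL_mono P Q : sublevel P Q -> Sig_extendible (ldom Q) (lval Q) ->
  sublevel (SigL P) (SigL Q).
Proof. exact: (ext_level_mono (m := Sig_mode)). Qed.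

Lemma PiL_self Q : Pi_extendible (ldom Q) (lval Q) -> sublevel Q (PiL Q).
Proof. exact: (ext_level_self (m := Pi_mode)). Qed.

Lemma SigL_self Q : Sig_extendible (ldom Q) (lval Q) -> sublevel Q (SigL Q).
Proof. exact: (ext_level_self (m := Sig_mode)). Qed.

End PiSigma.

Section Omega1.
Variables (W : Type) (R : W -> W -> Prop).
Hypothesis R_omega1 : omega1_order R.

Lemma omega1_total x y : R x y \/ x = y \/ R y x.
Proof. by case: R_omega1 => _ [_ [total _]]; exact: total. Qed.

Lemma omega1_minimal (P : W -> Prop) :
  (exists x, P x) -> exists x, P x /\ forall y, R y x -> ~ P y.
Proof.
case: R_omega1 => wfR _ [x Px]; apply: NNPP => no_min; move: Px.
elim/(well_founded_ind wfR): x => x IH Px.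
by apply: no_min; exists x; split=> // y Ryx; exact: IH.
Qed.

(* A maximal element [a] would make [W = {b | R b a} ∪ {a}] countable. *)
Lemma omega1_succ a : exists a', R a a' /\ forall b, R b a' -> ~ R a b.
Proof.
case: R_omega1 => _ [_ [_ [uncountable countable_below]]].
have [|a' [Raa' min_a']] := @omega1_minimal (R a); last first.
  by exists a'; split=> // b Rba' Rab; exact: min_a' b Rba' Rab.
apply: NNPP => a_max; apply: uncountable.
have [f f_inj] := countable_below a.
exists (fun b => if excluded_middle_informative (b = a) then 0%N else (f b).+1).
move=> x y _ _.
case: (excluded_middle_informative (x = a)) => [xa | xa];
  case: (excluded_middle_informative (y = a)) => [ya | ya] //=.
  by rewrite xa ya.
move=> [fxy].
have below b : b <> a -> R b a.
  by move=> ba; case: (omega1_total b a) => [// | [// | Rab]]; case: a_max; exists b.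
exact: f_inj (below x xa) (below y ya) fxy.
Qed.

(* If [i] were unbounded, [W] would be the countable union of the countable
   sets [{b | b = i n \/ R b (i n)}]. *)
Lemma omega1_seq_bounded (i : nat -> W) : exists a, forall n, R (i n) a.
Proof.
case: R_omega1 => _ [_ [_ [uncountable countable_below]]].
apply: NNPP => unbounded; apply: uncountable.
have [rk rkP] : exists rk : W -> nat, forall b, b = i (rk b) \/ R b (i (rk b)).
  apply: (choice (fun b n => b = i n \/ R b (i n))) => b.
  apply: NNPP => b_above; apply: unbounded; exists b => n.
  by case: (omega1_total (i n) b) => [// | [ib | Rbi]]; case: b_above; exists n; [left | right].
have [code codeP] : exists code : nat -> W -> nat,
    forall n x y, R x (i n) -> R y (i n) -> code n x = code n y -> x = y.
  apply: (choice (fun n (c : W -> nat) =>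
    forall x y, R x (i n) -> R y (i n) -> c x = c y -> x = y)) => n.
  have [c cP] := countable_below (i n); exists c => x y; exact: cP.
exists (fun b => pickle (rk b, if excluded_middle_informative (b = i (rk b)) then 0%N
                               else (code (rk b) b).+1)) => x y _ _.
move: (rkP x) (rkP y) => + + /(pcan_inj pickleK_inv) [rk_xy].
rewrite -rk_xy; set n := rk x.
case: (excluded_middle_informative (x = i n)) => [xi | xi];
  case: (excluded_middle_informative (y = i n)) => [yi | yi] //=.
  by rewrite xi yi.
by case=> [// | x_below] [// | y_below] [codexy]; exact: codeP x_below y_below codexy.
Qed.

End Omega1.

Section Hierarchy.
Context {d : Order.disp_t} {V : latticeType d} {E : porderZmodType} {W : Type}
  (R : W -> W -> Prop) (wfR : well_founded R) (L : V -> Prop) (phi : V -> E).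
Local Notation H := (hier wfR L phi).
Local Notation Pi_top := (Pi_top wfR L phi).
Local Notation Sig_top := (Sig_top wfR L phi).

Lemma hier_unfold a : H a = @hier_step d V E W R L phi a (fun b _ => H b).
Proof.
rewrite /hier; apply: Fix_eq => x f g fg; congr hier_step.
by apply: functional_extensionality_dep => y; apply: functional_extensionality.
Qed.

Lemma hier_cases a :
  (~ (exists b, R b a) /\ H a = (base_level L phi, base_level L phi)) \/
  (exists b, R b a /\ (forall c, R c a -> ~ R b c) /\ H a = (PiL (H b).2, SigL (H b).1)) \/
  ((forall b, R b a -> exists c, R c a /\ R b c) /\
    H a = (limL (fun s : {b | R b a} => (H (proj1_sig s)).1),
           limL (fun s : {b | R b a} => (H (proj1_sig s)).2))).
Proof.
rewrite hier_unfold /hier_step.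
case: excluded_middle_informative => [has_pred | no_pred]; last by left.
case: excluded_middle_informative => [has_max | no_max].
  right; left; exists (proj1_sig (constructive_indefinite_description _ has_max)).
  by have [Rba max_b] := proj2_sig (constructive_indefinite_description _ has_max).
right; right; split=> // b Rba; apply: NNPP => b_max; apply: no_max.
by exists b; split=> // c Rca Rbc; apply: b_max; exists c.
Qed.

Hypothesis R_omega1 : omega1_order R.
Hypothesis hier_ext : forall a, lext (H a).1.

Lemma hier_succ a : exists a', R a a' /\ H a' = (PiL (H a).2, SigL (H a).1).
Proof.
have [a' [Raa' min_a']] := omega1_succ R_omega1 a.
exists a'; split=> //.
case: (hier_cases a') => [[no_pred _] | [[b [Rba' [max_b ->]]] | [lim_a' _]]].
- by case: no_pred; exists a.
- case: (omega1_total R_omega1 b a) => [Rba | [-> // | Rab]].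
    by case: (max_b a Raa').
  by case: (min_a' b Rba').
- by have [b [Rba' Rab]] := lim_a' a Raa'; case: (min_a' b Rba').
Qed.

Lemma hier_Pi_extendible a : lext (H a).2 /\ Pi_extendible (ldom (H a).2) (lval (H a).2).
Proof. by have [a' [_ Ha']] := hier_succ a; have := hier_ext a'; rewrite Ha'. Qed.

Lemma hier_Sig_extendible a : Sig_extendible (ldom (H a).1) (lval (H a).1).
Proof.
have [a' [_ Ha']] := hier_succ a.
by have := (hier_Pi_extendible a').1; rewrite Ha' => -[].
Qed.

Lemma level_chain_rank I (rk : I -> W) (F : W -> @level d V E) :
  (forall i j, R (rk i) (rk j) -> sublevel (F (rk i)) (F (rk j))) ->
  level_chain (fun i => F (rk i)).
Proof.
move=> chainF i j; case: (omega1_total R_omega1 (rk i) (rk j)) => [Rij | [-> | Rji]].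
- by left; exact: chainF.
- by left; exact: sublevel_refl.
- by right; exact: chainF.
Qed.

Lemma hier_sub_succ b : (forall c, R c b -> pair_sublevel (H c) (H b)) ->
  pair_sublevel (H b) (PiL (H b).2, SigL (H b).1).
Proof.
move=> below_b.
have Pi_b := (hier_Pi_extendible b).2; have Sig_b := hier_Sig_extendible b.
suff [sub1 sub2] : sublevel (H b).1 (PiL (H b).2) /\ sublevel (H b).2 (SigL (H b).1).
  by split=> //; [exact: SigL_self | exact: PiL_self].
case: (hier_cases b) => [[_ Hb] | [[c [Rcb [_ Hb]]] | [_ Hb]]].
- by rewrite Hb in Pi_b Sig_b *; split; [exact: PiL_self | exact: SigL_self].
- have [c1b1 _ _ c2b2] := below_b c Rcb.
  by rewrite {1 3}Hb; split; [exact: PiL_mono | exact: SigL_mono].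
- rewrite {1 3}Hb; split; apply: limL_sub => -[c Rcb] /=.
    by have [_ c1b2 _ _] := below_b c Rcb; apply: sublevel_trans c1b2 (PiL_self _).
  by have [_ _ c2b1 _] := below_b c Rcb; apply: sublevel_trans c2b1 (SigL_self _).
Qed.

Lemma hier_coherent a b : R b a -> pair_sublevel (H b) (H a).
Proof.
elim/(well_founded_ind wfR): a b => a IH b Rba.
case: (hier_cases a) => [[no_pred _] | [[c [Rca [max_c Ha]]] | [lim_a Ha]]].
- by case: no_pred; exists b.
- have c_a : pair_sublevel (H c) (H a).
    by rewrite Ha; apply: hier_sub_succ => e Rec; exact: IH.
  case: (omega1_total R_omega1 b c) => [Rbc | [-> // | Rcb]]; last by case: (max_c b Rba).
  by case: c_a => c1a1 _ _ c2a2; exact: pair_sublevel_trans (IH c Rca b Rbc) c1a1 c2a2.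
- have [c [Rca Rbc]] := lim_a b Rba.
  have chain (pr : @level d V E * @level d V E -> @level d V E) :
      (forall p q, pair_sublevel p q -> sublevel (pr p) (pr q)) ->
      sublevel (pr (H c)) (limL (fun s : {e | R e a} => pr (H (proj1_sig s)))).
    move=> pr_mono.
    have chain_pr : level_chain (fun s : {e | R e a} => pr (H (proj1_sig s))).
      apply: (@level_chain_rank _ (@proj1_sig _ _) (fun e => pr (H e))).
      by move=> -[e Re] [e' Re'] /= Ree'; exact: pr_mono (IH e' Re' e Ree').
    exact: sublevel_limL (exist _ c Rca) chain_pr.
  apply: pair_sublevel_trans (IH c Rca b Rbc) _ _; rewrite Ha.
    by apply: chain => p q [].
  by apply: chain => p q [].
Qed.

Lemma hier_sub_top a : pair_sublevel (H a) (Pi_top, Sig_top).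
Proof.
have top1 b : sublevel (H b).1 Pi_top.
  apply: (sublevel_limL (F := fun e => (H e).1)).
  apply: (@level_chain_rank W id (fun e => (H e).1)) => e e' Ree'.
  by have [] := hier_coherent Ree'.
have top2 b : sublevel (H b).2 Sig_top.
  apply: (sublevel_limL (F := fun e => (H e).2)).
  apply: (@level_chain_rank W id (fun e => (H e).2)) => e e' Ree'.
  by have [] := hier_coherent Ree'.
have [a' [Raa' _]] := omega1_succ R_omega1 a.
have [_ a1a'2 a2a'1 _] := hier_coherent Raa'.
by split; [exact: top1 | exact: sublevel_trans a1a'2 (top2 a') |
           exact: sublevel_trans a2a'1 (top1 a') | exact: top2].
Qed.

Lemma hier_succ_sub_top a : pair_sublevel (PiL (H a).2, SigL (H a).1) (Pi_top, Sig_top).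
Proof. by have [a' [_ <-]] := hier_succ a; exact: hier_sub_top. Qed.

Lemma limL_seq_bounded (F G : W -> @level d V E) :
  (forall s t, R s t -> sublevel (F s) (G t)) ->
  forall x : nat -> V, (forall n, ldom (limL F) (x n)) ->
  exists a, forall n, ldom (G a) (x n) /\ lval (limL F) (x n) = lval (G a) (x n).
Proof.
move=> FG x x_in.
have [i iP] := choice _ (fun n => limL_val (x_in n)).
have [a ia] := omega1_seq_bounded R_omega1 i.
exists a => n; have [Fx ->] := iP n; by have [Gx <-] := FG _ _ (ia n) _ Fx.
Qed.

Lemma limL_ext_fixed (m : limit_mode V E) (F G : W -> @level d V E) :
  (forall s t, R s t -> sublevel (F s) (G t)) ->
  (forall a, extendible m (ldom (G a)) (lval (G a))) ->
  (forall a, sublevel (ext_level m (G a)) (limL F)) ->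
  ext_fixed m (limL F).
Proof.
move=> FG ext_G ext_G_sub; apply: ext_fixed_of_cover ext_G ext_G_sub _.
exact: limL_seq_bounded.
Qed.

End Hierarchy.

Theorem lemma5p32 (d : Order.disp_t) (V : latticeType d) (E : porderZmodType)
  (L : V -> Prop) (phi : V -> E)
  (W : Type) (R : W -> W -> Prop) (wfR : well_founded R) :
  sigma_distributive V -> sublattice L ->
  po_group E -> R_complete E -> valuation L phi ->
  omega1_order R ->
  (* phi is Pi_{aleph_1}-extendible *)
  lext (Pi_top wfR L phi) ->
  (* the hierarchy has collapsed at Pi_{aleph_1} phi *)
  collapsed_at (Pi_top wfR L phi) (Sig_top wfR L phi) (Pi_top wfR L phi).
Proof.
move=> _ _ _ _ _ R_omega1 hier_ext.
have coh s t : R s t -> pair_sublevel (hier wfR L phi s) (hier wfR L phi t).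
  exact: hier_coherent.
have Pi_ext a := hier_Pi_extendible R_omega1 hier_ext a.
have succ_top a := hier_succ_sub_top R_omega1 hier_ext a.
have [Pi_Pi_top Pi_set_top Pi_val_top] : ext_fixed Pi_mode (Pi_top wfR L phi).
  apply: (limL_ext_fixed R_omega1 (G := fun a => (hier wfR L phi a).2)).
  - by move=> s t /coh [].
  - by move=> a; exact: (Pi_ext a).2.
  - by move=> a; have [] := succ_top a.
have [Sig_Pi_top Sig_set_top Sig_val_top] : ext_fixed Sig_mode (Pi_top wfR L phi).
  apply: (limL_ext_fixed R_omega1 (G := fun a => (hier wfR L phi a).1)).
  - by move=> s t /coh [].
  - exact: hier_Sig_extendible.
  - by move=> a; have [] := succ_top a.
have [Pi_Sig_top _ _] : ext_fixed Pi_mode (Sig_top wfR L phi).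
  apply: (limL_ext_fixed R_omega1 (G := fun a => (hier wfR L phi a).2)).
  - by move=> s t /coh [].
  - by move=> a; exact: (Pi_ext a).2.
  - by move=> a; have [] := succ_top a.
split; first by split=> // a; exact: (Pi_ext a).1.
by split; [split | do 5 (split=> //)].
Qed.
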